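(* Let $D$ be an oriented graph and $D'$ a subdigraph of $D$. If $S$ is a minimum hull set of $D$ in the two-path convexity, then $|S\cap V(D')|\leq \overrightarrow{hn}_{P_3}(D')$.
   Context: An oriented graph is an orientation of a finite simple graph. The two-path interval function on an oriented graph $D$ is $I_{P_3}(u,v)=\{u,v\}$ together with all vertices $w$ with $(u,w),(w,v)\in A(D)$ or $(v,w),(w,u)\in A(D)$. For $S\subseteq V(D)$, $I_{P_3}(S)=\bigcup_{u,v\in S}I_{P_3}(u,v)$; $C$ is convex if $I_{P_3}(C)=C$; the convex hull of $S$ is the smallest convex set containing $S$; a hull set is a set whose convex hull is $V(D)$, and $\overrightarrow{hn}_{P_3}(D)$ is the minimum size of a hull set (computed in $D'$ itself for $\overrightarrow{hn}_{P_3}(D')$). *)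

(* A digraph on a finite vertex type T is given by a vertex
   set V : {set T} and an arc relation a : rel T (arcs among vertices of V). *)
From mathcomp Require Import all_boot.
Set Implicit Arguments. Unset Strict Implicit. Unset Printing Implicit Defensive.

Definition oriented {T : finType} (a : rel T) : Prop :=
  (forall x, ~~ a x x) /\ (forall x y, a x y -> ~~ a y x).

Definition subdigraph {T : finType} (a : rel T) (V' : {set T}) (a' : rel T) : Prop :=
  forall x y, a' x y -> [/\ a x y, x \in V' & y \in V'].

Definition P3_interval {T : finType} (a : rel T) (u v : T) : {set T} :=
  [set u; v] :|: [set w | (a u w && a w v) || (a v w && a w u)].

Definition P3_interval_set {T : finType} (a : rel T) (S : {set T}) : {set T} :=
  \bigcup_(u in S) \bigcup_(v in S) P3_interval a u v.

Definition P3_convex {T : finType} (V : {set T}) (a : rel T) (C : {set T}) : bool :=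
  (C \subset V) && (P3_interval_set a C == C).

Definition P3_hull {T : finType} (V : {set T}) (a : rel T) (S : {set T}) : {set T} :=
  \bigcap_(C : {set T} | P3_convex V a C && (S \subset C)) C.

Definition P3_hull_set {T : finType} (V : {set T}) (a : rel T) (S : {set T}) : bool :=
  (S \subset V) && (P3_hull V a S == V).

(* hull number: minimum size of a hull set (V itself is always a hull set
   when arcs stay inside V, so #|V| is a harmless default). *)
Definition P3_hull_number {T : finType} (V : {set T}) (a : rel T) : nat :=
  \big[minn/#|V|]_(S : {set T} | P3_hull_set V a S) #|S|.

Definition P3_min_hull_set {T : finType} (V : {set T}) (a : rel T) (S : {set T}) : bool :=
  P3_hull_set V a S && (#|S| == P3_hull_number V a).

(** Let S be a minimum hull set of D and S' a hull set of D'. Every convex set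
    of D meets V(D') in a convex set of D', so a convex set of D containing S'
    contains the hull of S' in D', namely all of V(D'). Hence exchanging
    S ∩ V(D') for S' in S still yields a hull set of D, and minimality of S
    gives |S ∩ V(D')| <= |S'|. *)
From mathcomp Require Import all_boot.

Set Implicit Arguments.
Unset Strict Implicit.
Unset Printing Implicit Defensive.

Section P3Hull.

Variables (T : finType) (V : {set T}) (a : rel T).

Lemma subset_P3_interval_set (C : {set T}) : C \subset P3_interval_set a C.
Proof.
apply/subsetP => x xC; apply/bigcupP; exists x => //; apply/bigcupP.
by exists x => //; rewrite !inE eqxx.
Qed.

Lemma P3_convexE (C : {set T}) :
  P3_convex V a C = (C \subset V) && (P3_interval_set a C \subset C).
Proof. by rewrite /P3_convex eqEsubset subset_P3_interval_set andbT. Qed.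

Lemma P3_hull_min (S C : {set T}) :
  P3_convex V a C -> S \subset C -> P3_hull V a S \subset C.
Proof.
by move=> convC SC; apply/subsetP => x /bigcapP; apply; rewrite convC SC.
Qed.

Lemma P3_hullS (S R : {set T}) :
  (forall C, P3_convex V a C -> R \subset C -> S \subset C) ->
  P3_hull V a S \subset P3_hull V a R.
Proof.
move=> SR; apply/subsetP => x xS; apply/bigcapP => C /andP[convC RC].
exact: subsetP (P3_hull_min convC (SR C convC RC)) x xS.
Qed.

Lemma P3_hull_number_min (S : {set T}) :
  P3_hull_set V a S -> P3_hull_number V a <= #|S|.
Proof.
move=> hullS; rewrite /P3_hull_number.
have : S \in index_enum {set T} by rewrite mem_index_enum.
elim: (index_enum _) => [|R r IHr] //; rewrite big_cons inE.
case/orP => [/eqP <-|Sr]; first by rewrite hullS geq_minl.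
by case: (P3_hull_set V a R); rewrite ?geq_min IHr ?orbT.
Qed.

Lemma leq_P3_hull_number (n : nat) :
  n <= #|V| -> (forall S, P3_hull_set V a S -> n <= #|S|) ->
  n <= P3_hull_number V a.
Proof.
move=> nV nS; rewrite /P3_hull_number.
by elim/big_ind: _ => // m k nm nk; rewrite leq_min nm nk.
Qed.

End P3Hull.

Section Subdigraph.

Variables (T : finType) (a : rel T) (V' : {set T}) (a' : rel T).
Hypothesis subD' : subdigraph a V' a'.

Lemma P3_interval_subdigraph (u v : T) : u \in V' -> v \in V' ->
  P3_interval a' u v \subset P3_interval a u v :&: V'.
Proof.
move=> uV vV; apply/subsetP => z; rewrite !inE.
case/orP => [/orP[]/eqP-> | /orP[]/andP[arc1 arc2]]; rewrite ?eqxx ?uV ?vV ?orbT //.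
all: by have [-> _ ->] := subD' arc1; have [-> _ _] := subD' arc2; rewrite !orbT.
Qed.

Lemma P3_interval_set_subdigraph (C : {set T}) :
  P3_interval_set a' (C :&: V') \subset P3_interval_set a C :&: V'.
Proof.
apply/subsetP => z /bigcupP[u /setIP[uC uV] /bigcupP[v /setIP[vC vV] zI]].
have /setIP[zIa zV] := subsetP (P3_interval_subdigraph uV vV) z zI.
rewrite inE zV andbT; apply/bigcupP; exists u => //.
by apply/bigcupP; exists v.
Qed.

Lemma P3_convex_subdigraph (V : {set T}) (C : {set T}) :
  P3_convex V a C -> P3_convex V' a' (C :&: V').
Proof.
rewrite !P3_convexE subsetIr => /andP[_ closedC] /=.
apply: subset_trans (P3_interval_set_subdigraph C) _.
exact: setSI.
Qed.

Lemma P3_hull_set_sub_convex (V : {set T}) (S' C : {set T}) :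
  P3_hull_set V' a' S' -> P3_convex V a C -> S' \subset C -> V' \subset C.
Proof.
case/andP=> S'V' /eqP hullS' convC S'C.
rewrite -hullS'; apply: subset_trans (subsetIl C V').
by apply: P3_hull_min; [exact: P3_convex_subdigraph convC | rewrite subsetI S'C].
Qed.

Lemma P3_hull_set_exchange (S S' : {set T}) :
  P3_hull_set [set: T] a S -> P3_hull_set V' a' S' ->
  P3_hull_set [set: T] a ((S :\: V') :|: S').
Proof.
case/andP=> _ /eqP hullS hullS'; rewrite /P3_hull_set subsetT eqEsubset subsetT.
rewrite -{1}hullS; apply: P3_hullS => C convC.
rewrite subUset => /andP[SV'C S'C].
have V'C := P3_hull_set_sub_convex hullS' convC S'C.
by rewrite -(setID S V') subUset SV'C (subset_trans (subsetIr S V')).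
Qed.

End Subdigraph.

Theorem proposition8 (T : finType) (a : rel T) (V' : {set T}) (a' : rel T)
  (S : {set T}) :
  oriented a -> subdigraph a V' a' ->
  P3_min_hull_set [set: T] a S ->
  #|S :&: V'| <= P3_hull_number V' a'.
Proof.
move=> _ subD' /andP[hullS /eqP minS].
apply: leq_P3_hull_number => [|S' hullS']; first by rewrite subset_leq_card ?subsetIr.
have := P3_hull_number_min (P3_hull_set_exchange subD' hullS hullS').
rewrite -minS -(cardsID V' S) addnC => /leq_trans/(_ (leq_card_setU _ _)).
by rewrite leq_add2l.
Qed.
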